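(* For any function $\varphi:\mathbb{Z}_{\ge 0}\to\mathbb{R}$ that is concave and nondecreasing with $\varphi(0)=0$, the Poisson concavity ratio satisfies $\alpha_\varphi\ge 1-\frac{1}{e}$.
   Context: A function $\varphi:\mathbb{Z}_{\ge0}\to\mathbb{R}$ is concave if $\varphi(x+1)-\varphi(x)$ is nonincreasing in $x$. The Poisson concavity ratio is $\alpha_\varphi=\inf_{x\in\mathbb{Z}_{\ge1}}\alpha_\varphi(x)$ where $\alpha_\varphi(x)=\frac{\mathbb{E}_{X\sim\mathrm{Pois}(x)}[\varphi(X)]}{\varphi(x)}$ (defined when $\varphi(x)>0$ for positive integers $x$). *)

From Stdlib Require Import Reals.
From Coquelicot Require Import Coquelicot.
Open Scope R_scope.

Definition concave_nat (phi : nat -> R) : Prop :=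
  forall x : nat, phi (S (S x)) - phi (S x) <= phi (S x) - phi x.

Definition nondecreasing_nat (phi : nat -> R) : Prop :=
  forall x : nat, phi x <= phi (S x).

Definition poisson_expect (phi : nat -> R) (x : R) : R :=
  Series (fun k : nat => exp (- x) * x ^ k / INR (Factorial.fact k) * phi k).

Definition alpha_at (phi : nat -> R) (x : nat) : R :=
  poisson_expect phi (INR x) / phi x.

Definition alpha (phi : nat -> R) : Rbar :=
  Glb_Rbar (fun r : R => exists x : nat, (1 <= x)%nat /\ r = alpha_at phi x).

From Stdlib Require Import Reals Lra Lia.
From Coquelicot Require Import Coquelicot.
Open Scope R_scope.

(* Fix an integer n >= 1 and let X ~ Pois(n). Concavity, monotonicity and
   phi(0) = 0 give phi(k) >= phi(n) min(k, n) / n, so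
   E[phi(X)] >= phi(n) E[min(X, n)] / n = phi(n) (1 - P(X = n)), where the
   last identity is a telescoping sum. Finally P(X = n) = e^-n n^n / n! is
   nonincreasing in n, because the ratio of consecutive terms is
   e^-1 (1 + 1/n)^n <= 1, and equals 1/e at n = 1. *)

Lemma exp_pow_INR (y : R) (n : nat) : exp y ^ n = exp (INR n * y).
Proof.
  induction n as [|n IH].
  - simpl. now rewrite Rmult_0_l, exp_0.
  - rewrite S_INR, <- tech_pow_Rmult, IH, <- exp_plus. f_equal. ring.
Qed.

Lemma pow_succ_le_exp_mul (n : nat) : INR (S n) ^ n <= exp 1 * INR n ^ n.
Proof.
  destruct n as [|m].
  - pose proof (exp_ineq1_le 1). simpl. lra.
  - set (n := S m). assert (Hn : 0 < INR n) by (apply lt_0_INR; lia).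
    assert (Hstep : INR (S n) <= INR n * exp (/ INR n)).
    { pose proof (exp_ineq1_le (/ INR n)). rewrite S_INR.
      replace (INR n + 1) with (INR n * (1 + / INR n)) by (field; lra).
      apply Rmult_le_compat_l; lra. }
    replace (exp 1) with (exp (/ INR n) ^ n) by (rewrite exp_pow_INR; f_equal; field; lra).
    rewrite Rmult_comm, <- Rpow_mult_distr.
    apply pow_incr. split; [apply pos_INR | exact Hstep].
Qed.

Lemma is_series_exp (y : R) : is_series (fun k => y ^ k / INR (Factorial.fact k)) (exp y).
Proof.
  eapply is_series_ext; [|apply (is_exp_Reals y)].
  intro k. cbv beta. now rewrite pow_n_pow.
Qed.

Lemma is_series_finite_support (c : nat -> R) (m : nat) :
  (forall k, (m < k)%nat -> c k = 0) -> is_series c (sum_f_R0 c m).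
Proof.
  intros Hc. apply is_series_Reals. intros eps Heps. exists m. intros N HN.
  replace (sum_f_R0 c N) with (sum_f_R0 c m); [rewrite R_dist_eq; lra|].
  induction HN as [|N HN IH]; [reflexivity|].
  rewrite tech5, <- IH, Hc by lia. ring.
Qed.

Definition poisson_pmf (x : R) (k : nat) : R := exp (- x) * x ^ k / INR (Factorial.fact k).

Section PoissonPmf.

Variable x : R.

Lemma poisson_pmf_ge0 (k : nat) : 0 <= x -> 0 <= poisson_pmf x k.
Proof.
  intros Hx. unfold poisson_pmf, Rdiv.
  apply Rmult_le_pos; [apply Rmult_le_pos|].
  - left. apply exp_pos.
  - now apply pow_le.
  - left. apply Rinv_0_lt_compat, INR_fact_lt_0.
Qed.

Lemma poisson_pmf_S (k : nat) : INR (S k) * poisson_pmf x (S k) = x * poisson_pmf x k.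
Proof.
  unfold poisson_pmf. rewrite fact_simpl, mult_INR, <- tech_pow_Rmult.
  field. split; [apply INR_fact_neq_0 | apply not_0_INR; lia].
Qed.

Lemma is_series_poisson_pmf : is_series (poisson_pmf x) 1.
Proof.
  replace 1 with (exp (- x) * exp x) by (rewrite <- exp_plus, Rplus_opp_l; apply exp_0).
  eapply is_series_ext; [|apply (is_series_scal (exp (- x)) _ _ (is_series_exp x))].
  intro k. unfold poisson_pmf, scal. simpl. unfold mult. simpl. unfold Rdiv. ring.
Qed.

Lemma ex_series_poisson_mul_linear (f : nat -> R) (C : R) :
  0 <= x -> (forall k, 0 <= f k <= C * INR k) ->
  ex_series (fun k => poisson_pmf x k * f k).
Proof.
  intros Hx Hf. apply ex_series_incr_1.
  apply (@ex_series_le R_AbsRing R_CompleteNormedModule _ (fun k => C * x * poisson_pmf x k)).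
  - intro k. change norm with Rabs.
    pose proof (poisson_pmf_ge0 (S k) Hx). destruct (Hf (S k)).
    rewrite Rabs_pos_eq by (now apply Rmult_le_pos).
    replace (C * x * poisson_pmf x k) with (C * (INR (S k) * poisson_pmf x (S k)))
      by (rewrite poisson_pmf_S; ring).
    nra.
  - exists (C * x * 1). apply (is_series_scal (C * x) _ _ is_series_poisson_pmf).
Qed.

Lemma sum_poisson_pmf_deficit (m : nat) :
  sum_f_R0 (fun k => (x - INR k) * poisson_pmf x k) m = x * poisson_pmf x m.
Proof.
  induction m as [|m IH]; [simpl; ring|].
  rewrite tech5, IH, <- poisson_pmf_S. ring.
Qed.

End PoissonPmf.

Lemma is_series_poisson_min (n : nat) : (1 <= n)%nat ->
  is_series (fun k => Rmin (INR k) (INR n) * poisson_pmf (INR n) k)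
    (INR n * (1 - poisson_pmf (INR n) n)).
Proof.
  intros Hn. destruct n as [|m]; [lia|]. set (x := INR (S m)).
  (* min(k, x) = x - (x - k)^+, and (x - k)^+ vanishes for k > m *)
  assert (Hdef : is_series (fun k => Rmax 0 (x - INR k) * poisson_pmf x k) (x * poisson_pmf x m)).
  { rewrite <- sum_poisson_pmf_deficit.
    replace (sum_f_R0 _ m) with (sum_f_R0 (fun k => Rmax 0 (x - INR k) * poisson_pmf x k) m).
    - apply is_series_finite_support. intros k Hk.
      rewrite Rmax_left; [ring|]. unfold x. pose proof (le_INR _ _ Hk). lra.
    - apply sum_eq. intros k Hk. rewrite Rmax_right; [reflexivity|].
      unfold x. rewrite S_INR. pose proof (le_INR _ _ Hk). lra. }
  assert (Hmode : poisson_pmf x m = poisson_pmf x (S m)).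
  { apply (Rmult_eq_reg_l x); [|unfold x; apply not_0_INR; lia].
    symmetry. apply poisson_pmf_S. }
  rewrite <- Hmode. clearbody x.
  assert (Hdiff := is_series_minus _ _ _ _ (is_series_scal x _ _ (is_series_poisson_pmf x)) Hdef).
  replace (x * (1 - poisson_pmf x m)) with (plus (scal x 1) (opp (x * poisson_pmf x m)))
    by (unfold plus, opp, scal; simpl; unfold mult; simpl; ring).
  eapply is_series_ext; [|exact Hdiff].
  intro k. unfold plus, opp, scal; simpl; unfold mult; simpl.
  unfold Rmin, Rmax. destruct (Rle_dec (INR k) x), (Rle_dec 0 (x - INR k)); lra.
Qed.

Lemma poisson_pmf_mode_succ_le (n : nat) :
  poisson_pmf (INR (S n)) (S n) <= poisson_pmf (INR n) n.
Proof.
  assert (Hstep := pow_succ_le_exp_mul n).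
  unfold poisson_pmf. rewrite fact_simpl, mult_INR, <- tech_pow_Rmult, S_INR in *.
  replace (exp (- (INR n + 1))) with (exp (- INR n) * / exp 1)
    by (rewrite <- exp_Ropp, <- exp_plus; f_equal; ring).
  assert (Hf := INR_fact_lt_0 n). assert (He := exp_pos 1). assert (He' := exp_pos (- INR n)).
  assert (Hn := pos_INR n).
  replace (exp (- INR n) * / exp 1 * ((INR n + 1) * (INR n + 1) ^ n) / ((INR n + 1) * INR (Factorial.fact n)))
    with (exp (- INR n) / INR (Factorial.fact n) * ((INR n + 1) ^ n / exp 1)) by (field; lra).
  replace (exp (- INR n) * INR n ^ n / INR (Factorial.fact n))
    with (exp (- INR n) / INR (Factorial.fact n) * INR n ^ n) by (field; lra).
  apply Rmult_le_compat_l.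
  - apply Rlt_le, Rdiv_lt_0_compat; lra.
  - apply Rle_div_l; lra.
Qed.

Lemma poisson_pmf_mode_le (n : nat) : (1 <= n)%nat -> poisson_pmf (INR n) n <= exp (-1).
Proof.
  induction 1 as [|n Hn IH].
  - unfold poisson_pmf. simpl. replace (- (1)) with (-1) by ring. lra.
  - exact (Rle_trans _ _ _ (poisson_pmf_mode_succ_le n) IH).
Qed.

Section ConcaveNat.

Variable phi : nat -> R.
Hypothesis phi_concave : concave_nat phi.
Hypothesis phi0 : phi 0%nat = 0.

Lemma concave_nat_incr_antitone (j k : nat) :
  (j <= k)%nat -> phi (S k) - phi k <= phi (S j) - phi j.
Proof.
  induction 1 as [|k _ IH]; [lra|]. pose proof (phi_concave k). lra.
Qed.

Lemma concave_nat_incr_mul_le (k : nat) : INR k * (phi (S k) - phi k) <= phi k.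
Proof.
  induction k as [|k IH]; [simpl; lra|].
  assert (Hinc := concave_nat_incr_antitone k (S k) (Nat.le_succ_diag_r k)).
  assert (Hk := pos_INR k). rewrite S_INR. nra.
Qed.

Lemma concave_nat_chord (k n : nat) : (k <= n)%nat -> INR k * phi n <= INR n * phi k.
Proof.
  induction 1 as [|n Hkn IH]; [lra|].
  assert (Hmul := concave_nat_incr_mul_le n).
  destruct (Nat.eq_dec n 0) as [->|Hn].
  - replace k with 0%nat by lia. rewrite phi0. simpl. lra.
  - assert (Hnpos : 0 < INR n) by (apply lt_0_INR; lia).
    assert (Hk := pos_INR k). rewrite S_INR.
    apply (Rmult_le_reg_l (INR n)); [exact Hnpos|]. nra.
Qed.

End ConcaveNat.

Lemma nondecreasing_nat_le (phi : nat -> R) (j k : nat) :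
  nondecreasing_nat phi -> (j <= k)%nat -> phi j <= phi k.
Proof.
  intros Hmono. induction 1 as [|k _ IH]; [lra|]. exact (Rle_trans _ _ _ IH (Hmono k)).
Qed.

Section ConcaveNondecreasing.

Variable phi : nat -> R.
Hypothesis phi_concave : concave_nat phi.
Hypothesis phi_nondecreasing : nondecreasing_nat phi.
Hypothesis phi0 : phi 0%nat = 0.

Lemma nondecreasing_nat_ge0 (k : nat) : 0 <= phi k.
Proof. rewrite <- phi0. apply nondecreasing_nat_le; [exact phi_nondecreasing | lia]. Qed.

Lemma concave_nondecreasing_min_le (k n : nat) :
  phi n * Rmin (INR k) (INR n) <= INR n * phi k.
Proof.
  destruct (Nat.le_ge_cases k n) as [Hkn|Hnk].
  - rewrite Rmin_left by (now apply le_INR).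
    rewrite Rmult_comm. exact (concave_nat_chord phi phi_concave phi0 k n Hkn).
  - rewrite Rmin_right by (now apply le_INR).
    rewrite Rmult_comm. apply Rmult_le_compat_l; [apply pos_INR|].
    exact (nondecreasing_nat_le phi n k phi_nondecreasing Hnk).
Qed.

Lemma ex_series_poisson_expect (x : R) : 0 <= x ->
  ex_series (fun k => poisson_pmf x k * phi k).
Proof.
  intros Hx. apply (ex_series_poisson_mul_linear x phi (phi 1%nat) Hx).
  intro k. split; [apply nondecreasing_nat_ge0|].
  destruct k as [|k]; [rewrite phi0; simpl; lra|].
  rewrite Rmult_comm. rewrite <- (Rmult_1_l (phi (S k))).
  apply (concave_nat_chord phi phi_concave phi0 1 (S k)). lia.
Qed.

Lemma poisson_expect_ge_mode (n : nat) : (1 <= n)%nat ->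
  phi n * (1 - poisson_pmf (INR n) n) <= poisson_expect phi (INR n).
Proof.
  intros Hn. set (x := INR n).
  assert (Hx : 0 < x) by (apply lt_0_INR; lia).
  assert (Hlow : is_series (fun k => phi n / x * (Rmin (INR k) x * poisson_pmf x k))
                   (phi n * (1 - poisson_pmf x n))).
  { replace (phi n * (1 - poisson_pmf x n)) with (scal (phi n / x) (x * (1 - poisson_pmf x n)))
      by (unfold scal; simpl; unfold mult; simpl; field; lra).
    exact (is_series_scal _ _ _ (is_series_poisson_min n Hn)). }
  rewrite <- (is_series_unique _ _ Hlow).
  apply Series_le; [|exact (ex_series_poisson_expect x (Rlt_le _ _ Hx))].
  intro k. fold (poisson_pmf x k).
  assert (Hp := poisson_pmf_ge0 x k (Rlt_le _ _ Hx)).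
  assert (Hmin := concave_nondecreasing_min_le k n). fold x in Hmin.
  assert (Hphin := nondecreasing_nat_ge0 n).
  assert (Hmin0 : 0 <= Rmin (INR k) x) by (apply Rmin_glb; [apply pos_INR | lra]).
  replace (phi n / x * (Rmin (INR k) x * poisson_pmf x k))
    with (poisson_pmf x k * (phi n * Rmin (INR k) x / x)) by (field; lra).
  split.
  - apply Rmult_le_pos; [exact Hp|]. apply Rdiv_le_0_compat; [nra | exact Hx].
  - apply Rmult_le_compat_l; [exact Hp|]. apply Rle_div_l; [exact Hx|]. lra.
Qed.

End ConcaveNondecreasing.

Theorem mainTheorem2 (phi : nat -> R) :
  concave_nat phi ->
  nondecreasing_nat phi ->
  phi 0%nat = 0 ->
  (forall x : nat, (1 <= x)%nat -> 0 < phi x) ->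
  Rbar_le (Finite (1 - exp (-1))) (alpha phi).
Proof.
  intros Hconc Hmono Hphi0 Hpos.
  apply Glb_Rbar_correct. intros r [n [Hn ->]]. simpl.
  assert (Hexpect := poisson_expect_ge_mode phi Hconc Hmono Hphi0 n Hn).
  assert (Hmode := poisson_pmf_mode_le n Hn).
  assert (Hphin := Hpos n Hn).
  unfold alpha_at. apply Rle_div_r; [exact Hphin|]. nra.
Qed.
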